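(* Let $F=\{\mathbf{p}_0,\ldots,\mathbf{p}_n\}\subset\mathbb{R}^d$ be not contained in any $(d-1)$-dimensional affine subspace, let $\mathcal{D}=\{0,\ldots,n\}$, let $\lambda_i\in(0,1)$ for $i\in\mathcal{D}$, and let $S_i(\mathbf{x})=\lambda_i\mathbf{x}+(1-\lambda_i)\mathbf{p}_i$. Suppose $$\min_{A\subseteq\mathcal{D},\ \#A=d+1}\ \sum_{i\in A}\lambda_i\ \ge\ d.$$ Then the unique non-empty compact set $X$ with $X=\bigcup_{i\in\mathcal{D}}S_i(X)$ equals $\mathrm{conv}(F)$.
   Context: $\mathrm{conv}(F)$ denotes the convex hull of $F$. *)

From HB Require Import structures.
From mathcomp Require Import all_boot all_order all_algebra.
From mathcomp Require Import all_classical all_reals all_analysis.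
Import numFieldNormedType.Exports.
Set Implicit Arguments.
Unset Strict Implicit.
Unset Printing Implicit Defensive.
Import Order.TTheory GRing.Theory Num.Theory.
Local Open Scope classical_set_scope.
Local Open Scope ring_scope.

Definition is_convex (R : realType) (d : nat) (C : set 'rV[R]_d) : Prop :=
  forall x y t, C x -> C y -> 0 <= t -> t <= 1 -> C (t *: x + (1 - t) *: y).

Definition conv_hull (R : realType) (d : nat) (F : set 'rV[R]_d) : set 'rV[R]_d :=
  [set x | forall C, is_convex C -> F `<=` C -> C x].

Definition dotv (R : realType) (d : nat) (u v : 'rV[R]_d) : R :=
  \sum_(k < d) u ord0 k * v ord0 k.

Definition simil (R : realType) (d : nat) (lam : R) (p x : 'rV[R]_d) : 'rV[R]_d :=
  lam *: x + (1 - lam) *: p.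

Definition ifs_invariant (R : realType) (d n : nat)
  (lam : 'I_n.+1 -> R) (p : 'I_n.+1 -> 'rV[R]_d) (X : set 'rV[R]_d) : Prop :=
  X = \bigcup_(i in [set: 'I_n.+1]) (simil (lam i) (p i) @` X).

(** Let K be the set of convex combinations of the p_i; it is conv(F), and it is
    compact as a continuous image of the standard simplex.  Each S_i maps K into
    itself by convexity.  Conversely each z in K lies in some S_i(K): since F
    spans R^d affinely we have n >= d, and by Carathéodory z has convex weights
    mu supported in a set A of exactly d+1 indices.  The hypothesis gives
    sum_(i in A) (1 - lam_i) <= 1 = sum_(i in A) mu_i, so mu_i >= 1 - lam_i for
    some i in A, which is exactly what makes S_i^-1(z) a convex combination.  For uniqueness, if A is bounded and covered by its
    images S_i(A), while B is closed, nonempty and mapped into itself, then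
    every point of A is within c^k * const of B for all k, where c = max lam_i < 1,
    so A is contained in B; apply this to (X, K) and to (K, X). *)

From HB Require Import structures.
From mathcomp Require Import all_boot all_order all_algebra.
From mathcomp Require Import all_classical all_reals all_analysis.
From mathcomp Require Import lra zify.
Import numFieldNormedType.Exports.
Set Implicit Arguments.
Unset Strict Implicit.
Unset Printing Implicit Defensive.
Import Order.TTheory GRing.Theory Num.Theory.
Local Open Scope classical_set_scope.
Local Open Scope ring_scope.

Lemma sumr_delta (R : pzRingType) (V : lmodType R) (I : finType) (f : I -> V) i :
  \sum_j (j == i)%:R *: f j = f i.
Proof.
by rewrite (bigD1 i) //= eqxx scale1r big1 ?addr0 // => j /negbTE ->; rewrite scale0r.
Qed.

Lemma exists_gt0_of_sum_eq0 (R : realDomainType) (I : finType) (c : I -> R) :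
  \sum_i c i = 0 -> (exists i, c i != 0) -> exists i, 0 < c i.
Proof.
move=> c0 [k ck]; apply/not_existsP => cle0; case/eqP: ck.
have cN i : 0 <= - c i by rewrite oppr_ge0 leNgt; apply/negP/cle0.
apply/oppr_inj; rewrite oppr0; apply: (psumr_eq0P (P := xpredT) (fun i _ => cN i)) => //.
by rewrite sumrN c0 oppr0.
Qed.

Lemma exists_le_of_sum_le (R : realDomainType) (I : finType) (A : {pred I})
    (f g : I -> R) : (0 < #|A|)%N ->
  \sum_(i in A) f i <= \sum_(i in A) g i -> exists2 i, i \in A & f i <= g i.
Proof.
move=> /card_gt0P[x xA].
case: (pickP [pred i | (i \in A) && (f i <= g i)]) => [i /andP[]|gf]; first by exists i.
rewrite leNgt => /negP[]; apply: ltr_sum => [|i iA].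
  by apply/hasP; exists x; [rewrite mem_index_enum | exact: xA].
by move: (gf i); rewrite /= iA ltNge => /negbT.
Qed.

Lemma exists_ratio_bound (R : realDomainType) (I : finType) (lam : I -> R) :
  (forall i, 0 < lam i < 1) -> exists2 c, 0 <= c < 1 & forall i, 0 <= lam i <= c.
Proof.
move=> lam01; exists (\big[Order.max/0]_i lam i).
  rewrite bigmax_ge_id /=; apply/bigmax_ltP; split => // i _.
  by case/andP: (lam01 i).
by move=> i; case/andP: (lam01 i) => /ltW -> _; exact: le_bigmax.
Qed.

Lemma exists_superset_card (T : finType) (s : {pred T}) k :
  (#|s| <= k <= #|T|)%N -> exists2 A : {set T}, s \subset A & #|A| = k.
Proof.
case/andP=> sk; rewrite -(subnKC sk); elim: (k - #|s|)%N => [|j IH] kT.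
  exists (finset s); last by rewrite addn0 cardsE.
  by apply/fintype.subsetP => x; rewrite inE.
have [|A sA Aj] := IH; first by rewrite addnS in kT; exact: ltnW.
have /card_gt0P[x] : (0 < #|~: A|)%N by have := cardsC A; lia.
rewrite inE => xA; exists (x |: A); last by rewrite cardsU1 xA Aj addnS.
exact: fintype.subset_trans sA (finset.subsetUr _ _).
Qed.

Lemma continuous_sum (R : realType) (T : topologicalType) (V : normedModType R)
    (I : finType) (F : I -> T -> V) :
  (forall i, continuous (F i)) -> continuous (fun x => \sum_i F i x).
Proof.
move=> cF; rewrite -fct_sumE; apply: (big_ind (fun f : T -> V => continuous f)) => //.
- exact: cst_continuous.
- by move=> f g cf cg x; exact: continuousD (cf x) (cg x).
Qed.

Section LinearDependence.
Variables (R : realType) (m : nat).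

Lemma rV_dependent (I : finType) (w : I -> 'rV[R]_m) : (m < #|I|)%N ->
  exists c : I -> R, (exists i, c i != 0) /\ \sum_i c i *: w i = 0.
Proof.
move=> mI; pose M := \matrix_(j < #|I|) w (enum_val j).
have : ~~ row_free M by rewrite /row_free neq_ltn (leq_ltn_trans (rank_leq_col M)).
rewrite -kermx_eq0 => /rowV0Pn[v /sub_kermxP vM0 /rV0Pn[k vk]].
exists (fun i => v 0 (enum_rank i)); split; first by exists (enum_val k); rewrite enum_valK.
rewrite -[RHS]vM0 mulmx_sum_row (reindex (fun j : 'I_#|I| => enum_val j)) /=; last first.
  by exists enum_rank => x _; [exact: enum_valK | exact: enum_rankK].
by apply: eq_bigr => j _; rewrite enum_valK rowK.
Qed.

Lemma rV_dependent_in (I : finType) (S : {pred I}) (w : I -> 'rV[R]_m) :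
  (m < #|S|)%N -> exists c : I -> R,
    [/\ exists i, c i != 0, forall i, i \notin S -> c i = 0 & \sum_i c i *: w i = 0].
Proof.
rewrite -card_sig => /(rV_dependent (fun s : {x | x \in S} => w (val s))).
move=> [c [[s cs] c0]].
exists (fun i => oapp c 0 (insub i)); split.
- by exists (val s); rewrite valK.
- by move=> i iS; rewrite insubF //; apply: negbTE.
rewrite (bigID (mem S)) /= [X in _ + X]big1 ?addr0 => [|i iS]; last first.
  by rewrite insubF ?scale0r //; apply: negbTE.
by rewrite big_sub -[RHS]c0; apply: eq_bigr => x _; rewrite valK.
Qed.

End LinearDependence.

Lemma affine_dependent (R : realType) (d : nat) (I : finType) (S : {pred I})
    (q : I -> 'rV[R]_d) : (d.+1 < #|S|)%N ->
  exists c : I -> R, [/\ exists i, c i != 0, forall i, i \notin S -> c i = 0,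
    \sum_i c i = 0 & \sum_i c i *: q i = 0].
Proof.
rewrite -addn1 => /(rV_dependent_in (fun i => row_mx (q i) (1 : 'rV_1))).
move=> [c [c_nz cS c0]]; exists c; split => //.
- have := congr1 (fun v => rsubmx v 0 0) c0.
  rewrite /= linear_sum linear0 summxE mxE => h; rewrite -[RHS]h.
  by apply: eq_bigr => i _; rewrite linearZ /= row_mxKr !mxE mulr1.
- have := congr1 lsubmx c0; rewrite /= linear_sum linear0 => h; rewrite -[RHS]h.
  by apply: eq_bigr => i _; rewrite linearZ /= row_mxKl.
Qed.

Definition affinely_spanning (R : realType) (d : nat) (I : Type) (p : I -> 'rV[R]_d) :=
  forall (a : 'rV[R]_d) (b : R), (forall i, dotv a (p i) = b) -> a = 0.

(* If n < d, the d coordinate rows of the differences p_j - p_0 are dependent in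
   R^n; the dependence coefficients form a nonzero normal vector to all p_i. *)
Lemma affinely_spanning_dim_le (R : realType) (d n : nat) (p : 'I_n.+1 -> 'rV[R]_d) :
  affinely_spanning p -> (d <= n)%N.
Proof.
move=> p_span; rewrite leqNgt; apply/negP => nd.
pose w (k : 'I_d) := \row_(j < n) (p (lift ord0 j) 0 k - p ord0 0 k).
have [|c [[k ck] c0]] := @rV_dependent _ _ _ w; first by rewrite card_ord.
suff /rowP/(_ k) : \row_k c k = 0 by rewrite !mxE => ck0; rewrite ck0 eqxx in ck.
apply: (p_span _ (dotv (\row_k c k) (p ord0))) => i.
case: (unliftP ord0 i) => [j ->|-> //]; apply/eqP; rewrite -subr_eq0 /dotv -sumrB.
have := congr1 (fun v : 'rV_n => v 0 j) c0; rewrite /= summxE mxE => cj0.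
by apply/eqP; rewrite -[RHS]cj0; apply: eq_bigr => l _; rewrite !mxE mulrBr.
Qed.

Lemma is_convex_sum (R : realType) (d : nat) (C : set 'rV[R]_d) : is_convex C ->
  forall m (mu : 'I_m -> R) (q : 'I_m -> 'rV[R]_d), (forall i, 0 <= mu i) ->
  \sum_i mu i = 1 -> (forall i, C (q i)) -> C (\sum_i mu i *: q i).
Proof.
move=> cC; elim=> [|m IH] mu q mu0; first by rewrite big_ord0 => /esym/eqP; rewrite oner_eq0.
rewrite !big_ord_recr /= => mu1 Cq.
set s := \sum_(i < m) mu (widen_ord (leqnSn m) i) in mu1.
have s0 : 0 <= s by apply: sumr_ge0.
have [s_eq0|s_neq0] := eqVneq s 0.
  have mu_eq0 i : mu (widen_ord (leqnSn m) i) = 0.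
    exact: (psumr_eq0P (P := xpredT) (fun i _ => mu0 _) s_eq0).
  rewrite big1 => [|i _]; last by rewrite mu_eq0 scale0r.
  by move: mu1; rewrite s_eq0 !add0r => ->; rewrite scale1r.
have Cw : C (\sum_(i < m)
    (mu (widen_ord (leqnSn m) i) / s) *: q (widen_ord (leqnSn m) i)).
  apply: (IH (fun i => mu (widen_ord _ i) / s) (fun i => q (widen_ord _ i))) => [i||i].
  - exact: divr_ge0.
  - by rewrite -mulr_suml mulfV.
  - exact: Cq.
have := cC _ _ s Cw (Cq ord_max) s0; rewrite -mu1 lerDl => /(_ (mu0 _)).
rewrite [s + _]addrC addrK scaler_sumr; congr (C (_ + _)); apply: eq_bigr => i _.
by rewrite scalerA mulrCA mulfV ?mulr1.
Qed.

Section SimilarityContraction.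
Variables (R : realType) (d : nat) (I : Type) (lam : I -> R) (p : I -> 'rV[R]_d).

Definition simil_stable (B : set 'rV[R]_d) :=
  forall i b, B b -> B (simil (lam i) (p i) b).

Definition simil_covered (A : set 'rV[R]_d) :=
  forall a, A a -> exists i a', A a' /\ a = simil (lam i) (p i) a'.

Variable c : R.
Hypothesis lam_le : forall i, 0 <= lam i <= c.

(* a = (S_i1 o ... o S_ik) a' and b' is the image of b by the same composition. *)
Lemma simil_covered_approx A B : simil_covered A -> simil_stable B ->
  forall k a b, A a -> B b -> exists a' b' L,
    [/\ A a', B b', 0 <= L <= c ^+ k & a - b' = L *: (a' - b)].
Proof.
move=> covA stB; elim=> [|k IH] a b Aa Bb.
  by exists a, b, 1; rewrite ler01 lexx scale1r.
have [i [a1 [Aa1 ->]]] := covA a Aa.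
have [a' [b1 [L [Aa' Bb1 /andP[L0 Lc] ab]]]] := IH a1 b Aa1 Bb.
have /andP[li lc] := lam_le i.
exists a', (simil (lam i) (p i) b1), (lam i * L); split => //; first exact: stB.
  by rewrite mulr_ge0 //= exprS ler_pM.
by rewrite /simil -scalerA -ab opprD addrACA subrr addr0 scalerBr.
Qed.

Hypothesis c01 : 0 <= c < 1.

Lemma simil_covered_sub A B b0 : simil_covered A -> simil_stable B ->
  bounded_set A -> closed B -> B b0 -> A `<=` B.
Proof.
move=> covA stB [M [_ AM]] clB Bb0 a Aa; rewrite (closure_id B).1 //.
have {}AM x : A x -> `|x| <= M + 1 by apply: AM; rewrite ltrDl.
move=> N /nbhs_ballP[e /= e0 eN].
pose K := M + 1 + `|b0| + 1.
have K0 : 0 < K.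
  by rewrite /K; have := AM a Aa; have := normr_ge0 a; have := normr_ge0 b0; lra.
have /andP[c0 c1] := c01.
have c_norm : `|c| < 1 by rewrite ger0_norm.
have [k _ /(_ k (leqnn k))] := cvgr_dist_lt _ _ (cvg_expr c_norm) _ (divr_gt0 e0 K0).
rewrite /= sub0r normrN ger0_norm ?exprn_ge0 // => ck.
have [a' [b' [L [Aa' Bb' /andP[L0 Lc] ab]]]] := simil_covered_approx covA stB k Aa Bb0.
exists b'; split => //; apply: eN; rewrite -ball_normE /ball_ /= ab normrZ ger0_norm //.
apply: (le_lt_trans (y := c ^+ k * K)); last by rewrite -ltr_pdivlMr.
apply: ler_pM => //; have := AM a' Aa'; have := ler_normB a' b0; rewrite /K; lra.
Qed.

End SimilarityContraction.

Section ConvexCombinations.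
Variables (R : realType) (d n : nat) (p : 'I_n -> 'rV[R]_d).

Definition convex_weights (mu : 'I_n -> R) (z : 'rV[R]_d) :=
  [/\ forall i, 0 <= mu i, \sum_i mu i = 1 & \sum_i mu i *: p i = z].

Definition convex_combinations : set 'rV[R]_d := [set z | exists mu, convex_weights mu z].

Lemma convex_combinations_convex : is_convex convex_combinations.
Proof.
move=> x y t [mu [mu0 mu1 <-]] [nu [nu0 nu1 <-]] t0 t1.
exists (fun i => t * mu i + (1 - t) * nu i); split.
- by move=> i; rewrite addr_ge0 // mulr_ge0 // subr_ge0.
- by rewrite big_split /= -!mulr_sumr mu1 nu1 !mulr1 addrC subrK.
- rewrite !scaler_sumr -big_split /=; apply: eq_bigr => i _.
  by rewrite !scalerA scalerDl.
Qed.

Lemma convex_combinations_point i : convex_combinations (p i).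
Proof.
exists (fun j => (j == i)%:R); split => [j||]; last exact: sumr_delta.
- exact: ler0n.
- by have := sumr_delta (V := R^o) (fun=> 1) i; under eq_bigr do rewrite [_ *: _]mulr1.
Qed.

Lemma conv_hullE : conv_hull [set x | exists i, x = p i] = convex_combinations.
Proof.
apply/seteqP; split => z.
  apply; first exact: convex_combinations_convex.
  by move=> _ [i ->]; exact: convex_combinations_point.
move=> [mu [mu0 mu1 <-]] C cC FC.
by apply: is_convex_sum => // i; apply: FC; exists i.
Qed.

Lemma convex_combinations_compact : compact convex_combinations.
Proof.
pose simplex := [set v : 'rV[R]_n | forall i, `[0, 1]%classic (v 0 i)] `&`
  (fun v => \sum_i v 0 i) @^-1` [set 1].
have simplex_compact : compact simplex.
  apply: compact_closedI; first exact: (rV_compact (fun=> @segment_compact R 0 1)).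
  apply: preimage_closed; last exact: closed_eq.
  by move=> v _; apply: continuous_sum => i; exact: coord_continuous.
have -> : convex_combinations = (fun v => \sum_i v 0 i *: p i) @` simplex.
  apply/seteqP; split => z.
    move=> [mu [mu0 mu1 <-]]; exists (\row_i mu i).
      split => [i|] /=; last by rewrite -mu1; apply: eq_bigr => i _; rewrite mxE.
      by rewrite mxE in_itv /= mu0 -mu1 (bigD1 i) //= lerDl sumr_ge0.
    by apply: eq_bigr => i _; rewrite mxE.
  move=> [v [v01 v1] <-]; exists (fun i => v 0 i); split => // i.
  by have := v01 i; rewrite /= in_itv /= => /andP[].
apply: continuous_compact => //; apply: continuous_subspaceT => v.
by apply: continuous_sum => i {}v; apply: continuousZr_tmp; exact: coord_continuous.
Qed.

Lemma caratheodory_step mu z : convex_weights mu z -> (d.+1 < #|support mu|)%N ->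
  exists2 nu, convex_weights nu z & (#|support nu| < #|support mu|)%N.
Proof.
move=> [mu0 mu1 muz] dS.
have [c [c_nz cS c0 cp]] := affine_dependent p dS.
have [i0 ci0] := exists_gt0_of_sum_eq0 c0 c_nz.
have [j cj jmin] := @arg_minP _ R _ i0 (fun i => 0 < c i) (fun i => mu i / c i) ci0.
set t := mu j / c j.
have t0 : 0 <= t by rewrite divr_ge0 // ltW.
exists (fun i => mu i - t * c i); first split.
- move=> i; rewrite subr_ge0; have [ci|ci] := ltrP 0 (c i).
    by rewrite -ler_pdivlMr //; exact: jmin.
  by apply: le_trans (mu0 i); rewrite mulr_ge0_le0.
- by rewrite sumrB -mulr_sumr c0 mulr0 subr0.
- under eq_bigr do rewrite scalerBl -scalerA.
  by rewrite sumrB -scaler_sumr cp scaler0 subr0.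
have jS : j \in support mu.
  by rewrite supportE; apply: contraTneq cj => mj; rewrite cS ?ltxx // supportE mj eqxx.
rewrite (cardD1 j (support mu)) jS add1n ltnS subset_leq_card //.
apply/fintype.subsetP => i; rewrite !inE; apply: contraNT.
case/nandP => [/negPn/eqP -> | /negPn/eqP mi]; first by rewrite /t divfK ?subrr // gt_eqF.
by rewrite mi cS ?mulr0 ?subrr // supportE mi eqxx.
Qed.

Lemma caratheodory z : convex_combinations z ->
  exists2 mu, convex_weights mu z & (#|support mu| <= d.+1)%N.
Proof.
move=> [mu]; have [k] := ubnP #|support mu|.
elim: k mu => // k IH mu; rewrite ltnS => muk muz.
have [|dS] := leqP #|support mu| d.+1; first by exists mu.
have [nu nuz nu_mu] := caratheodory_step muz dS.
exact: IH (leq_trans nu_mu muk) nuz.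
Qed.

Lemma convex_combinations_simil_stable (lam : 'I_n -> R) :
  (forall i, 0 <= lam i <= 1) -> simil_stable lam p convex_combinations.
Proof.
move=> lam01 i w cw; have /andP[l0 l1] := lam01 i.
exact: convex_combinations_convex cw (convex_combinations_point i) l0 l1.
Qed.

Lemma convex_combinations_simil_preimage l i mu z : convex_weights mu z ->
  0 < l -> 1 - l <= mu i -> exists w, convex_combinations w /\ z = simil l (p i) w.
Proof.
move=> [mu0 mu1 muz] l0 lmu; have l_neq0 : l != 0 by rewrite gt_eqF.
exists (l^-1 *: (z - (1 - l) *: p i)); split; last first.
  by rewrite /simil scalerA mulfV // scale1r subrK.
exists (fun j => l^-1 * (mu j - (j == i)%:R * (1 - l))); split.
- move=> j; apply: mulr_ge0; first by rewrite invr_ge0 ltW.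
  by rewrite subr_ge0; have [->|] := eqVneq j i; rewrite ?mul1r ?mul0r.
- rewrite -mulr_sumr sumrB mu1 (sumr_delta (V := R^o) (fun=> 1 - l)).
  by rewrite opprB addrC subrK mulVf.
- under eq_bigr do rewrite -scalerA scalerBl -scalerA.
  by rewrite -scaler_sumr sumrB muz sumr_delta.
Qed.

Lemma convex_combinations_simil_covered (lam : 'I_n -> R) : (d < n)%N ->
  (forall i, 0 < lam i < 1) ->
  (forall A : {set 'I_n}, #|A| = d.+1 -> d%:R <= \sum_(i in A) lam i) ->
  simil_covered lam p convex_combinations.
Proof.
move=> dn lam01 lamA z /caratheodory[mu muz mud].
have [|A muA Ad] := @exists_superset_card _ (support mu) d.+1; first by rewrite mud card_ord.
have [i iA lam_mu] : exists2 i, i \in A & 1 - lam i <= mu i.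
  apply: exists_le_of_sum_le; first by rewrite Ad.
  have <- : \sum_i mu i = \sum_(i in A) mu i.
    rewrite [LHS](bigID (mem A)) /= [X in _ + X]big1 ?addr0 // => j jA.
    by apply/eqP; apply: contraNT jA => /(fintype.subsetP muA).
  case: muz => _ -> _; rewrite sumrB sumr_const Ad -[d.+1]addn1 natrD mulr1n.
  by have := lamA A Ad; lra.
have /andP[lam0 _] := lam01 i.
by exists i; exact: convex_combinations_simil_preimage muz lam0 lam_mu.
Qed.

End ConvexCombinations.

Lemma ifs_invariantP (R : realType) (d n : nat) (lam : 'I_n.+1 -> R)
    (p : 'I_n.+1 -> 'rV[R]_d) (X : set 'rV[R]_d) :
  ifs_invariant lam p X <-> simil_covered lam p X /\ simil_stable lam p X.
Proof.
split => [XE | [covX stX]].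
  split => [a|i b Xb]; first by rewrite {1}XE => -[i _ [a' Xa' <-]]; exists i, a'.
  by rewrite XE; exists i => //; exists b.
apply/seteqP; split => [a /covX[i [a' [Xa' ->]]] | a [i _ [b Xb <-]]]; last exact: stX.
by exists i => //; exists a'.
Qed.

Theorem lemma2p4 (R : realType) (d n : nat)
  (p : 'I_n.+1 -> 'rV[R]_d) (lam : 'I_n.+1 -> R) :
  injective p ->
  (* F is not contained in any (d-1)-dimensional affine subspace (hyperplane) *)
  (forall (a : 'rV[R]_d) (b : R), (forall i, dotv a (p i) = b) -> a = 0) ->
  (forall i, 0 < lam i < 1) ->
  (forall A : {set 'I_n.+1}, #|A| = d.+1 -> d%:R <= \sum_(i in A) lam i) ->
  let F := [set x | exists i, x = p i] in
  [/\ conv_hull F !=set0, compact (conv_hull F), ifs_invariant lam p (conv_hull F)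
    & forall X : set 'rV[R]_d,
        X !=set0 -> compact X -> ifs_invariant lam p X -> X = conv_hull F].
Proof.
move=> _ p_span lam01 lamA F; rewrite /F conv_hullE.
set K := convex_combinations p.
have K_compact : compact K by exact: convex_combinations_compact.
have K_closed : closed K := @compact_closed _ _ (@norm_hausdorff _ _) K_compact.
have K_stable : simil_stable lam p K.
  by apply: convex_combinations_simil_stable => i; case/andP: (lam01 i) => /ltW -> /ltW.
have K_covered : simil_covered lam p K.
  apply: convex_combinations_simil_covered lam01 lamA.
  exact: affinely_spanning_dim_le p_span.
have [c c01 lam_c] := exists_ratio_bound lam01.
split; [by exists (p ord0); exact: convex_combinations_point | by [] | exact/ifs_invariantP |].
move=> X [x0 Xx0] X_compact /ifs_invariantP[X_covered X_stable].
have X_closed : closed X := @compact_closed _ _ (@norm_hausdorff _ _) X_compact.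
apply/seteqP; split.
  apply: (simil_covered_sub lam_c c01 X_covered K_stable _ K_closed).
  - exact: compact_bounded.
  - exact: convex_combinations_point ord0.
apply: (simil_covered_sub lam_c c01 K_covered X_stable _ X_closed Xx0).
exact: compact_bounded.
Qed.
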